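(* Let $n\ge0$ be an integer, $\omega\in\mathbb{R}$ and $\theta_0\in\mathbb{T}$, with $\theta_j=\theta_0+j\omega$. Suppose that for each $0\le k\le n$, $(\Sigma_k,\theta_0)$ is a reversed $(r_k,l_k,a_k)$-system. Then for every integer $t>0$, $$\frac{|\{0\le j<t:\theta_{-j}\in\bigcup_{k=0}^n\Sigma_k\}|}{t}\le\sum_{k=0}^n\Big(\frac{l_k}{t}+\frac{l_k}{r_k+l_k}\Big)$$ and $$\frac{|\{0\le j<t:\theta_{-j}\in\bigcup_{k=0}^n\Sigma_k\}|}{t}\le\sum_{k=0}^n\frac{l_k}{m_k+l_k},\qquad m_k=\min\{a_k,r_k\}.$$
   Context: Fix $\Sigma\subset\mathbb{T}$ and the orbit $\theta_j=\theta_0+j\omega$, $j\in\mathbb{Z}$. $\Sigma$ has minimal return time $r>0$ if every maximal block of consecutive iterates outside $\Sigma$ lying between two visits to $\Sigma$ has length at least $r$; it has maximal confinement time $l>0$ if every block of consecutive iterates all lying in $\Sigma$ has length at most $l$. $(\Sigma,\theta_0)$ is a reversed $(r,l,a)$-system if $\Sigma$ has minimal return time $r$, maximal confinement time $l$, and reversed accumulation time $a\ge0$, meaning $\theta_{-i}\notin\Sigma$ for all $0\le i<a$. *)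

From Stdlib Require Import Reals Lra Lia ZArith Arith List.
Open Scope R_scope.

(* The circle T = R/Z is represented by its fundamental domain [0,1):
   a point x : R of the real line is projected to T via frac_part x.
   A subset Sigma of T is given by a (boolean) characteristic function on
   representatives in [0,1) (only its values on [0,1) matter). *)
Definition tset := R -> bool.

Definition inT (Sigma : tset) (x : R) : bool := Sigma (frac_part x).

Definition theta (theta0 omega : R) (j : Z) : R := theta0 + IZR j * omega.

Definition visit (Sigma : tset) (theta0 omega : R) (j : Z) : bool :=
  inT Sigma (theta theta0 omega j).

Definition min_return_time (Sigma : tset) (theta0 omega : R) (r : nat) : Prop :=
  forall i j : Z, (i + 1 < j)%Z ->
    visit Sigma theta0 omega i = true ->
    visit Sigma theta0 omega j = true ->
    (forall k : Z, (i < k < j)%Z -> visit Sigma theta0 omega k = false) ->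
    (Z.of_nat r <= j - i - 1)%Z.

Definition max_confinement_time (Sigma : tset) (theta0 omega : R) (l : nat) : Prop :=
  forall (i : Z) (m : nat),
    (forall k : Z, (i <= k < i + Z.of_nat m)%Z -> visit Sigma theta0 omega k = true) ->
    (m <= l)%nat.

Definition rev_accumulation_time (Sigma : tset) (theta0 omega : R) (a : nat) : Prop :=
  forall i : nat, (i < a)%nat -> visit Sigma theta0 omega (- Z.of_nat i)%Z = false.

Definition reversed_system (Sigma : tset) (theta0 omega : R) (r l a : nat) : Prop :=
  (0 < r)%nat /\ (0 < l)%nat /\
  min_return_time Sigma theta0 omega r /\
  max_confinement_time Sigma theta0 omega l /\
  rev_accumulation_time Sigma theta0 omega a.

Definition in_union (Sig : nat -> tset) (n : nat) (theta0 omega : R) (j : nat) : bool :=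
  existsb (fun k => visit (Sig k) theta0 omega (- Z.of_nat j)%Z) (seq 0 (S n)).

Definition back_count (Sig : nat -> tset) (n : nat) (theta0 omega : R) (t : nat) : nat :=
  length (filter (in_union Sig n theta0 omega) (seq 0 t)).

From Stdlib Require Import Reals Lra Lia ZArith Arith List.
Open Scope R_scope.

(* Read the orbit backwards, j |-> theta_{-j}, as a boolean sequence.  Its
   runs of visits have length at most l and consecutive runs are separated
   by at least r non-visits, so each run together with the gap preceding it
   uses at least r + l slots while contributing at most l visits: this gives
   the density l / (r + l).  The first run is preceded by at least
   min(a, r) slots, whence the second bound; alternatively one may pretend
   that r slots of the first gap lie before time 0, at the price of the
   additive error l / t.  The union bound then sums over k. *)

Definition window_count (f : nat -> bool) (p n : nat) : nat :=
  length (filter f (seq p n)).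

Definition runs_le (f : nat -> bool) (l : nat) : Prop :=
  forall i m, (forall k, (i <= k < i + m)%nat -> f k = true) -> (m <= l)%nat.

Definition gaps_ge (f : nat -> bool) (r : nat) : Prop :=
  forall i j, (i + 1 < j)%nat -> f i = true -> f j = true ->
    (forall k, (i < k < j)%nat -> f k = false) -> (r <= j - i - 1)%nat.

Lemma window_count_add f p m n :
  window_count f p (m + n) = (window_count f p m + window_count f (p + m) n)%nat.
Proof. unfold window_count. now rewrite seq_app, filter_app, length_app. Qed.

Lemma window_count_const f p n (v : bool) :
  (forall k, (p <= k < p + n)%nat -> f k = v) ->
  window_count f p n = if v then n else 0%nat.
Proof.
  unfold window_count. revert p; induction n as [|n IH]; intros p Hv.
  - now destruct v.
  - simpl. rewrite (Hv p) by lia.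
    destruct v; simpl; rewrite IH by (intros k Hk; apply Hv; lia); reflexivity.
Qed.

Lemma longest_constant_prefix (g : nat -> bool) (v : bool) p n :
  exists d, (d <= n)%nat /\ (forall k, (p <= k < p + d)%nat -> g k = v) /\
    (d = n \/ g (p + d)%nat = negb v).
Proof.
  revert p; induction n as [|n IH]; intros p.
  - exists 0%nat. repeat split; [lia | intros; lia | now left].
  - destruct (Bool.bool_dec (g p) v) as [Hp | Hp].
    + destruct (IH (S p)) as [d [Hd [Hpre Hend]]].
      exists (S d). repeat split; [lia | |].
      * intros k Hk. destruct (Nat.eq_dec k p) as [-> | ]; [exact Hp | apply Hpre; lia].
      * replace (p + S d)%nat with (S p + d)%nat by lia. destruct Hend; [left; lia | now right].
    + exists 0%nat. repeat split; [lia | intros; lia |].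
      right. rewrite Nat.add_0_r. now destruct (g p), v.
Qed.

Section Density.

Variables (f : nat -> bool) (r l : nat).
Hypothesis (Hruns : runs_le f l) (Hgaps : gaps_ge f r).

Lemma gap_after_run i :
  f i = true -> f (S i) = false -> forall k, (S i <= k < S i + r)%nat -> f k = false.
Proof.
  intros Hi Hsi.
  assert (Hoff : forall e, (e < r)%nat -> f (S i + e)%nat = false).
  { intro e; induction e as [e IH] using lt_wf_ind; intros He.
    destruct e as [|e]; [now rewrite Nat.add_0_r |].
    destruct (f (S i + S e)%nat) eqn:Hfe; [exfalso | reflexivity].
    enough (r <= S i + S e - i - 1)%nat by lia.
    apply Hgaps; [lia | assumption | assumption |].
    intros k Hk. replace k with (S i + (k - S i))%nat by lia. apply IH; lia. }
  intros k Hk. replace k with (S i + (k - S i))%nat by lia. apply Hoff; lia.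
Qed.

(* [d] counts the slots of the leading gap that are taken to lie before
   [p]; only [m - d] non-visits are actually required after [p]. *)
Lemma window_count_density m d p n :
  (m <= r)%nat ->
  (forall k, (p <= k < p + (m - d))%nat -> f k = false) ->
  ((m + l) * window_count f p n <= l * (d + n))%nat.
Proof.
  revert m d p; induction n as [n IH] using lt_wf_ind; intros m d p Hmr Hlead.
  destruct (longest_constant_prefix f false p n) as [d0 [Hd0 [Hoff Hfirst]]].
  destruct (Nat.eq_dec d0 n) as [-> | Hd0n].
  { rewrite (window_count_const f p n false Hoff). lia. }
  assert (Hon : f (p + d0)%nat = true) by (destruct Hfirst; [lia | assumption]).
  set (q := (p + d0)%nat) in *.
  destruct (longest_constant_prefix f true q (n - d0)) as [b [Hb [Hrun Hstop]]].
  assert (Hb1 : (1 <= b)%nat).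
  { destruct b; [|lia]. rewrite Nat.add_0_r, Hon in Hstop. destruct Hstop; [lia | discriminate]. }
  assert (Hbl : (b <= l)%nat) by (exact (Hruns q b Hrun)).
  assert (Hmd : (m <= d0 + d)%nat).
  { destruct (Nat.le_gt_cases (m - d) d0); [lia |].
    rewrite Hlead in Hon by lia. discriminate. }
  set (s := (n - d0 - b)%nat).
  replace n with (d0 + (b + s))%nat at 1 by lia.
  rewrite !window_count_add, (window_count_const f p d0 false Hoff),
    (window_count_const f (p + d0) b true Hrun).
  assert (Hrest : ((r + l) * window_count f (p + d0 + b) s <= l * s)%nat).
  { destruct (Nat.eq_dec s 0) as [-> | Hs].
    - unfold window_count. simpl. lia.
    - assert (Hoff' : f (q + b)%nat = false) by (destruct Hstop; [lia | assumption]).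
      apply (IH s ltac:(lia) r 0%nat); [lia |].
      intros k Hk. apply (gap_after_run (q + b - 1)); [apply Hrun; lia | | ];
        replace (S (q + b - 1)) with (q + b)%nat by lia; [assumption | lia]. }
  assert (Hmb : (m * b <= (d0 + d) * l)%nat) by (apply Nat.mul_le_mono; assumption).
  nia.
Qed.

End Density.

Definition back_visit (Sigma : tset) (theta0 omega : R) (j : nat) : bool :=
  visit Sigma theta0 omega (- Z.of_nat j)%Z.

Section ReversedSystem.

Variables (Sigma : tset) (theta0 omega : R) (r l a : nat).
Hypothesis Hsys : reversed_system Sigma theta0 omega r l a.

Let f := back_visit Sigma theta0 omega.

Lemma back_visit_runs_le : runs_le f l.
Proof.
  destruct Hsys as [_ [_ [_ [Hconf _]]]]. intros i m Hrun.
  destruct m as [|m]; [lia |].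
  apply (Hconf (- Z.of_nat (i + m))%Z (S m)). intros k Hk.
  replace k with (- Z.of_nat (Z.to_nat (- k)))%Z by lia.
  apply Hrun. lia.
Qed.

Lemma back_visit_gaps_ge : gaps_ge f r.
Proof.
  destruct Hsys as [_ [_ [Hret _]]]. intros i j Hij Hi Hj Hbetween.
  enough (Z.of_nat r <= (- Z.of_nat i) - (- Z.of_nat j) - 1)%Z by lia.
  apply Hret; [lia | assumption | assumption |].
  intros k Hk. replace k with (- Z.of_nat (Z.to_nat (- k)))%Z by lia.
  apply Hbetween. lia.
Qed.

Lemma back_visit_density_shifted t :
  ((r + l) * window_count f 0 t <= (r + l) * l + l * t)%nat.
Proof.
  assert (H := window_count_density f r l back_visit_runs_le back_visit_gaps_ge
    r r 0 t (le_n r) ltac:(intros; lia)).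
  nia.
Qed.

Lemma back_visit_density t :
  ((Nat.min a r + l) * window_count f 0 t <= l * t)%nat.
Proof.
  destruct Hsys as [_ [_ [_ [_ Hacc]]]].
  apply (window_count_density f r l back_visit_runs_le back_visit_gaps_ge
    _ 0 0 t (Nat.le_min_r a r)).
  intros k Hk. apply Hacc. lia.
Qed.

End ReversedSystem.

Lemma length_filter_orb {A} (g h : A -> bool) (s : list A) :
  (length (filter (fun x => (g x || h x)%bool) s) <= length (filter g s) + length (filter h s))%nat.
Proof. induction s as [|x s IH]; simpl; [lia |]. destruct (g x), (h x); simpl; lia. Qed.

Lemma length_filter_existsb {A I} (h : I -> A -> bool) (ks : list I) (s : list A) :
  (length (filter (fun x => existsb (fun k => h k x) ks) s)
    <= list_sum (map (fun k => length (filter (h k) s)) ks))%nat.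
Proof.
  induction ks as [|k ks IH]; simpl.
  - induction s; simpl; lia.
  - pose proof (length_filter_orb (h k) (fun x => existsb (fun k => h k x) ks) s). lia.
Qed.

Lemma INR_list_sum_seq (g : nat -> nat) n :
  INR (list_sum (map g (seq 0 (S n)))) = sum_f_R0 (fun k => INR (g k)) n.
Proof.
  induction n as [|n IH]; [simpl; f_equal; lia |].
  rewrite seq_S, map_app, list_sum_app, plus_INR, IH. simpl. now rewrite Nat.add_0_r.
Qed.

Lemma INR_div_le_add_of_mul_le (c t e z u : nat) :
  (0 < t)%nat -> (0 < u)%nat -> (u * c <= u * e + z * t)%nat ->
  INR c / INR t <= INR e / INR t + INR z / INR u.
Proof.
  intros Ht Hu H.
  apply lt_0_INR in Ht, Hu. apply le_INR in H. rewrite plus_INR, !mult_INR in H.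
  apply Rmult_le_reg_r with (INR t * INR u); [nra |].
  replace (INR c / INR t * (INR t * INR u)) with (INR u * INR c) by (field; lra).
  replace ((INR e / INR t + INR z / INR u) * (INR t * INR u))
    with (INR u * INR e + INR z * INR t) by (field; lra).
  exact H.
Qed.

Theorem lemmaB2 (n : nat) (omega theta0 : R) (Sig : nat -> tset)
  (r l a : nat -> nat)
  (Hsys : forall k : nat, (k <= n)%nat ->
     reversed_system (Sig k) theta0 omega (r k) (l k) (a k)) :
  forall t : nat, (0 < t)%nat ->
    INR (back_count Sig n theta0 omega t) / INR t
      <= sum_f_R0 (fun k => INR (l k) / INR t + INR (l k) / INR (r k + l k)) n
    /\
    INR (back_count Sig n theta0 omega t) / INR t
      <= sum_f_R0 (fun k => INR (l k) / INR (Nat.min (a k) (r k) + l k)) n.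
Proof.
  intros t Ht.
  set (c k := window_count (back_visit (Sig k) theta0 omega) 0 t).
  assert (Hpos : 0 < INR t) by (apply lt_0_INR; exact Ht).
  assert (Hunion : INR (back_count Sig n theta0 omega t) / INR t
                   <= sum_f_R0 (fun k => INR (c k) / INR t) n).
  { unfold Rdiv. rewrite <- scal_sum, (Rmult_comm (/ INR t)), <- INR_list_sum_seq.
    apply Rmult_le_compat_r; [left; apply Rinv_0_lt_compat, Hpos |].
    apply le_INR, (length_filter_existsb (fun k => back_visit (Sig k) theta0 omega)). }
  split; eapply Rle_trans; try exact Hunion; apply sum_Rle; intros k Hk;
    destruct (Hsys k Hk) as [Hr [Hl _]].
  - apply INR_div_le_add_of_mul_le; [exact Ht | lia |].
    exact (back_visit_density_shifted _ _ _ _ _ _ (Hsys k Hk) t).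
  - rewrite <- (Rplus_0_l (INR (l k) / _)), <- (Rdiv_0_l (INR t)).
    apply (INR_div_le_add_of_mul_le _ _ 0); [exact Ht | lia |].
    rewrite Nat.mul_0_r. exact (back_visit_density _ _ _ _ _ _ (Hsys k Hk) t).
Qed.
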